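(* Assume $B$ is non-decreasing and unbounded. Then $H$ is local $\delta$-admissible on $\mathcal{X}$ with $\delta(t)=1/\sqrt{B(t)}$; that is, for every $\varepsilon>0$ there exist $\eta>0$ and $t_0(\varepsilon)$ such that for all $t\in\mathcal{X}$ with $t>t_0(\varepsilon)$ and all complex $w$ with $|w|\le\eta/\sqrt{B(t)}$, \[ \log\frac{H(t+w)}{H(t)}=wA(t)+\tfrac12w^2B(t)+h_t(w),\qquad |h_t(w)|\le\varepsilon|w|^2B(t). \]
   Context: Let $G(z)=\sum_{n\ge0}a_n^2z^n$ be an entire function with $a_n\ge0$, infinitely many non-zero. Put $H(t)=G(e^t)$, $A=H'/H$, $B=A'$. Choose points $t_\ell\uparrow\infty$ with $B(t_\ell)=\ell^6$ (for all $\ell$ for which this is possible) and $T_\ell=[t_\ell,t_{\ell+1}]$; $T_\ell$ is long if $t_{\ell+1}-t_\ell\ge8/\ell^2$, with interior $\mathring T_\ell=[t_\ell+2/\ell^2,\,t_{\ell+1}-2/\ell^2]$. The set of normal values is $\mathcal{X}=\bigcup_{T_\ell\text{ long}}\mathring T_\ell$. The logarithm is the branch analytic in $w$ and vanishing at $w=0$. *)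

From Stdlib Require Import Reals.
From Coquelicot Require Import Coquelicot.
Open Scope R_scope.

Definition Cexp (z : C) : C := (exp (Re z) * cos (Im z), exp (Re z) * sin (Im z)).

Definition coefG (a : nat -> R) : nat -> R := fun n => (a n) ^ 2.
Definition Hf (a : nat -> R) (t : R) : R := PSeries (coefG a) (exp t).
Definition Af (a : nat -> R) (t : R) : R := Derive (Hf a) t / Hf a t.
Definition Bf (a : nat -> R) (t : R) : R := Derive (Af a) t.

Definition is_long (tl : nat -> R) (l : nat) : Prop :=
  tl (S l) - tl l >= 8 / (INR l) ^ 2.

Definition in_interior (tl : nat -> R) (l : nat) (t : R) : Prop :=
  tl l + 2 / (INR l) ^ 2 <= t <= tl (S l) - 2 / (INR l) ^ 2.

(* Normal values X: union of the interiors of the long T_l, l >= l0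
   (l0 is the first index for which B(t) = l^6 is solvable). *)
Definition normal_values (tl : nat -> R) (l0 : nat) (t : R) : Prop :=
  exists l, (l0 <= l)%nat /\ is_long tl l /\ in_interior tl l t.

(* Put p_n(t) = a_n^2 e^(n t) / H(t): a probability distribution on the naturals with mean
   A(t) and variance B(t).  Then H(t + w) / H(t) = e^(w A(t)) M_t(w) with
   M_t(w) = sum_n p_n(t) e^((n - A(t)) w) (weight, mgf and mgfC below).  Taylor's formula
   for e^z, whose cubic remainder is controlled by the real values M_t(1/sqrt B(t)) and
   M_t(-1/sqrt B(t)), gives |M_t(w) - 1 - w^2 B(t)/2| <= C (|w| sqrt B(t))^3, and
   log(1 + u) = u + O(|u|^2) turns this into the expansion with error eps |w|^2 B(t) as soon
   as |w| sqrt B(t) <= eta(eps).  For a normal value t in T_l we have B(t) >= l^6, so the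
   window |x| <= 1/sqrt B(t) <= l^-3 stays left of t_(l+1), where B <= (l+1)^6 <= 64 B(t);
   writing log M_t(s) as a double mean-value expression in B bounds both of these values
   by e^64, uniformly in t. *)

From Stdlib Require Import Reals Lra Lia.
From Coquelicot Require Import Coquelicot.
Open Scope R_scope.

Lemma exp_le_compat (x y : R) : x <= y -> exp x <= exp y.
Proof. intros h; destruct (Req_dec x y) as [->|hne]; [lra | left; apply exp_increasing; lra]. Qed.

Lemma exp_mult_INR (n : nat) (s : R) : exp (INR n * s) = exp s ^ n.
Proof.
  induction n as [|n IH].
  - rewrite Rmult_0_l; apply exp_0.
  - rewrite S_INR, Rmult_plus_distr_r, Rmult_1_l, exp_plus, IH; simpl; ring.
Qed.

Lemma exp_Rabs_le_cosh (y : R) : exp (Rabs y) <= 2 * cosh y.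
Proof.
  unfold cosh; assert (h1 := exp_pos y); assert (h2 := exp_pos (- y)).
  unfold Rabs; destruct (Rcase_abs y); lra.
Qed.

Lemma exp_Rabs_div_le (x sg : R) :
  0 < sg -> exp (Rabs x / sg) <= exp (x * / sg) + exp (x * - / sg).
Proof.
  intros hsg.
  replace (Rabs x / sg) with (Rabs (x * / sg))
    by (rewrite Rabs_mult, (Rabs_pos_eq (/ sg)) by (apply Rlt_le, Rinv_0_lt_compat, hsg);
        reflexivity).
  eapply Rle_trans; [apply exp_Rabs_le_cosh|].
  unfold cosh; replace (x * - / sg) with (- (x * / sg)) by ring; right; field.
Qed.

Lemma cube_exp_half_le (y : R) : 0 <= y -> y ^ 3 * exp (y / 2) <= 216 * exp y.
Proof.
  intros hy.
  assert (h6 := exp_ineq1_le (y / 6)).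
  assert (e3 : exp (y / 2) = exp (y / 6) ^ 3)
    by (rewrite <- exp_mult_INR; f_equal; simpl; field).
  assert (e2 : exp y = exp (y / 2) * exp (y / 2))
    by (rewrite <- exp_plus; f_equal; field).
  assert (hcube : (y / 6) ^ 3 <= exp (y / 6) ^ 3) by (apply pow_incr; lra).
  assert (hpos := exp_pos (y / 2)).
  rewrite e2; rewrite e3 at 2 3; rewrite e3 in hpos; nra.
Qed.

Lemma lin_exp_half_le (y : R) : 0 <= y -> y * exp (y / 2) <= 2 * exp y.
Proof.
  intros hy.
  assert (h2 := exp_ineq1_le (y / 2)); assert (hpos := exp_pos (y / 2)).
  assert (e2 : exp y = exp (y / 2) * exp (y / 2))
    by (rewrite <- exp_plus; f_equal; field).
  rewrite e2; nra.
Qed.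

Lemma is_series_term_le (u : nat -> R) (l : R) :
  is_series u l -> (forall n, 0 <= u n) -> forall n, u n <= l.
Proof.
  intros hu hpos n.
  assert (hsum : forall N, 0 <= sum_n u N).
  { induction N as [|N IH]; [rewrite sum_O; apply hpos|].
    rewrite sum_Sn; specialize (hpos (S N)); unfold plus; simpl; lra. }
  assert (hincr : forall N, sum_n u N <= sum_n u (S N)).
  { intros N; rewrite sum_Sn; specialize (hpos (S N)); unfold plus; simpl; lra. }
  apply Rle_trans with (sum_n u n).
  - destruct n as [|n]; [rewrite sum_O; lra|].
    rewrite sum_Sn; specialize (hsum n); unfold plus; simpl; lra.
  - exact (is_lim_seq_incr_compare _ l hu hincr n).
Qed.

Lemma is_series_norm_le {K : AbsRing} {V : NormedModule K}
    (u : nat -> V) (v : nat -> R) (l : V) (lv : R) :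
  is_series u l -> is_series v lv -> (forall n, norm (u n) <= v n) -> norm l <= lv.
Proof.
  intros hu hv huv.
  assert (hpartial : forall N, norm (sum_n u N) <= sum_n v N).
  { induction N as [|N IH]; [rewrite !sum_O; apply huv|].
    rewrite !sum_Sn; eapply Rle_trans; [apply norm_triangle|].
    specialize (huv (S N)); unfold plus; simpl; lra. }
  exact (is_lim_seq_le _ _ (norm l) lv hpartial
           (filterlim_comp _ _ _ (sum_n u) norm _ _ _ hu (filterlim_norm l)) hv).
Qed.

Lemma is_series_ext_eq (u v : nat -> R) (l l' : R) :
  (forall n, u n = v n) -> l = l' -> is_series u l -> is_series v l'.
Proof. intros huv <-; apply is_series_ext, huv. Qed.

Lemma is_series_lincomb3 (u0 u1 u2 : nat -> R) (l0 l1 l2 k0 k1 k2 : R) :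
  is_series u0 l0 -> is_series u1 l1 -> is_series u2 l2 ->
  is_series (fun n => k0 * u0 n + k1 * u1 n + k2 * u2 n) (k0 * l0 + k1 * l1 + k2 * l2).
Proof.
  intros h0 h1 h2.
  exact (is_series_plus _ _ _ _ (is_series_plus _ _ _ _ (is_series_scal_l k0 _ _ h0)
           (is_series_scal_l k1 _ _ h1)) (is_series_scal_l k2 _ _ h2)).
Qed.

Lemma sum_n_C (u : nat -> C) (N : nat) :
  sum_n u N = (sum_n (fun n => Re (u n)) N, sum_n (fun n => Im (u n)) N).
Proof.
  induction N as [|N IH].
  - rewrite !sum_O; destruct (u 0%nat); reflexivity.
  - rewrite !sum_Sn, IH; destruct (u (S N)); reflexivity.
Qed.

Lemma is_series_C (u : nat -> C) (lr li : R) :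
  is_series (fun n => Re (u n)) lr -> is_series (fun n => Im (u n)) li ->
  is_series (V := C_NormedModule) u (lr, li).
Proof.
  intros hr hi; apply filterlim_locally; intros eps.
  generalize (filter_and _ _ (proj1 (filterlim_locally _ _) hr eps)
                              (proj1 (filterlim_locally _ _) hi eps)).
  apply filter_imp; intros N [br bi]; rewrite sum_n_C; split; assumption.
Qed.

Lemma filterlim_within_lipschitz {K : AbsRing} {U V : NormedModule K}
    (f : U -> V) (D : U -> Prop) (x : U) (k : R) :
  0 <= k ->
  (forall y, D y -> norm (minus (f y) (f x)) <= k * norm (minus y x)) ->
  filterlim f (within D (locally x)) (locally (f x)).
Proof.
  intros hk hlip; apply filterlim_locally; intros eps.
  set (nf := @norm_factor K U); assert (hnf : 0 < nf) by apply norm_factor_gt_0.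
  assert (hdelta : 0 < eps / (nf * (k + 1))).
  { apply Rdiv_lt_0_compat; [apply cond_pos | nra]. }
  exists (mkposreal _ hdelta); intros y hy hDy.
  apply norm_compat1.
  assert (hny := norm_compat2 x y (mkposreal _ hdelta) hy); simpl in hny; fold nf in hny.
  assert (hsmall : k * (nf * (eps / (nf * (k + 1)))) < eps).
  { replace (k * (nf * (eps / (nf * (k + 1)))))
      with (eps * (k / (k + 1))) by (field; lra).
    assert (k / (k + 1) < 1) by (apply Rlt_div_l; lra).
    assert (h := cond_pos eps); nra. }
  eapply Rle_lt_trans; [apply hlip, hDy|].
  eapply Rle_lt_trans; [apply Rmult_le_compat_l; [exact hk | left; exact hny]|].
  exact hsmall.
Qed.

(** * Derivatives of complex-valued functions of a real variable *)

Lemma im_le_Cmod (z : C) : Rabs (Im z) <= Cmod z.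
Proof.
  assert (h := Cmod2_alt z); assert (hm := Cmod_ge_0 z).
  apply Rabs_le; split; nra.
Qed.

Lemma Cmod_le_Rabs_Re_Im (z : C) : Cmod z <= Rabs (Re z) + Rabs (Im z).
Proof.
  assert (h := Cmod2_alt z); assert (hm := Cmod_ge_0 z).
  assert (hr := Rabs_pos (Re z)); assert (hi := Rabs_pos (Im z)).
  rewrite <- (pow2_abs (Re z)), <- (pow2_abs (Im z)) in h.
  nra.
Qed.

Lemma Rabs_le_of_derive_le (f d : R -> R) (M : R) (k : nat) :
  f 0 = 0 ->
  (forall s, 0 <= s <= 1 -> is_derive f s (d s)) ->
  (forall s, 0 <= s <= 1 -> Rabs (d s) <= M * s ^ k) ->
  forall s, 0 <= s <= 1 -> Rabs (f s) <= M * s ^ S k.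
Proof.
  intros h0 hd hM s hs.
  destruct (Req_dec s 0) as [->|hs0].
  - rewrite h0, Rabs_R0; simpl; lra.
  - destruct (MVT_cor2 f d 0 s ltac:(lra)
        (fun c hc => proj1 (is_derive_Reals _ _ _) (hd c ltac:(lra))))
      as [c [hfs hc]].
    rewrite h0, !Rminus_0_r in hfs; rewrite hfs, Rabs_mult, (Rabs_right s) by lra.
    assert (hdc := hM c ltac:(lra)).
    assert (hck : 0 < c ^ k) by (apply pow_lt; lra).
    assert (hks : c ^ k <= s ^ k) by (apply pow_incr; lra).
    assert (hM0 : 0 <= M) by (assert (h := Rabs_pos (d c)); nra).
    assert (hds : Rabs (d c) <= M * s ^ k)
      by (eapply Rle_trans; [exact hdc | apply Rmult_le_compat_l; lra]).
    simpl; nra.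
Qed.

Definition is_derive_C (f : R -> C) (s : R) (d : C) : Prop :=
  is_derive (fun x => Re (f x)) s (Re d) /\ is_derive (fun x => Im (f x)) s (Im d).

Lemma is_derive_C_const (c : C) (s : R) : is_derive_C (fun _ => c) s 0%C.
Proof. split; simpl; auto_derive; trivial. Qed.

Lemma is_derive_C_line (c : C) (s : R) : is_derive_C (fun x => RtoC x * c)%C s c.
Proof. destruct c as [cr ci]; split; simpl; auto_derive; trivial; ring. Qed.

Lemma is_derive_C_minus (f g : R -> C) (df dg : C) (s : R) :
  is_derive_C f s df -> is_derive_C g s dg ->
  is_derive_C (fun x => f x - g x)%C s (df - dg)%C.
Proof.
  intros [fr fi] [gr gi]; split; simpl.
  - exact (is_derive_minus _ _ _ _ _ fr gr).
  - exact (is_derive_minus _ _ _ _ _ fi gi).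
Qed.

(* Re and Im are estimated separately, whence the factor 2. *)
Lemma Cmod_le_of_derive_le (f d : R -> C) (M : R) (k : nat) :
  f 0 = 0%C ->
  (forall s, 0 <= s <= 1 -> is_derive_C f s (d s)) ->
  (forall s, 0 <= s <= 1 -> Cmod (d s) <= M * s ^ k) ->
  forall s, 0 <= s <= 1 -> Cmod (f s) <= 2 * M * s ^ S k.
Proof.
  intros h0 hd hM s hs.
  assert (hre : Rabs (Re (f s)) <= M * s ^ S k).
  { apply (Rabs_le_of_derive_le (fun x => Re (f x)) (fun x => Re (d x)));
      [rewrite h0; reflexivity | apply hd | | exact hs].
    intros x hx; eapply Rle_trans; [apply re_le_Cmod | apply hM, hx]. }
  assert (him : Rabs (Im (f s)) <= M * s ^ S k).
  { apply (Rabs_le_of_derive_le (fun x => Im (f x)) (fun x => Im (d x)));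
      [rewrite h0; reflexivity | apply hd | | exact hs].
    intros x hx; eapply Rle_trans; [apply im_le_Cmod | apply hM, hx]. }
  assert (h := Cmod_le_Rabs_Re_Im (f s)); lra.
Qed.

Lemma Cexp_add (z1 z2 : C) : Cexp (z1 + z2) = (Cexp z1 * Cexp z2)%C.
Proof.
  destruct z1 as [x1 y1], z2 as [x2 y2]; unfold Cexp, Cmult; simpl.
  rewrite exp_plus, cos_plus, sin_plus; f_equal; ring.
Qed.

Lemma Cexp_RtoC (x : R) : Cexp (RtoC x) = RtoC (exp x).
Proof. unfold Cexp, RtoC; simpl; rewrite cos_0, sin_0; f_equal; ring. Qed.

Lemma Cmod_Cexp (z : C) : Cmod (Cexp z) = exp (Re z).
Proof.
  destruct z as [x y]; unfold Cexp, Cmod; simpl.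
  transitivity (sqrt (Rsqr (exp x))); [f_equal | apply sqrt_Rsqr, Rlt_le, exp_pos].
  assert (h := sin2_cos2 y); unfold Rsqr in *.
  transitivity (exp x * exp x * (sin y * sin y + cos y * cos y)); [ring | rewrite h; ring].
Qed.

Lemma pow_n_Cexp (z : C) (n : nat) :
  pow_n (K := C_AbsRing) (Cexp z) n = Cexp (RtoC (INR n) * z).
Proof.
  induction n as [|n IH].
  - simpl; replace (RtoC 0 * z)%C with (RtoC 0) by ring.
    rewrite Cexp_RtoC, exp_0; reflexivity.
  - change (pow_n (K := C_AbsRing) (Cexp z) (S n))
      with (Cexp z * pow_n (K := C_AbsRing) (Cexp z) n)%C.
    rewrite IH, <- Cexp_add, S_INR, RtoC_plus; f_equal; ring.
Qed.

Lemma Cexp_RtoC_mult_le (x : R) (w : C) :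
  Cmod (Cexp (RtoC x * w)) <= exp (x * Cmod w) + exp (x * - Cmod w).
Proof.
  assert (hre : Re (RtoC x * w) <= Rabs (x * Cmod w)).
  { rewrite Rabs_mult, (Rabs_pos_eq (Cmod w)), <- Cmod_R, <- Cmod_mult by apply Cmod_ge_0.
    eapply Rle_trans; [apply Rle_abs | apply re_le_Cmod]. }
  rewrite Cmod_Cexp; eapply Rle_trans; [apply exp_le_compat, hre|].
  eapply Rle_trans; [apply exp_Rabs_le_cosh|].
  unfold cosh; replace (x * - Cmod w) with (- (x * Cmod w)) by ring; right; field.
Qed.

Lemma is_derive_C_Cexp_remainders (z : C) (x : R) :
  is_derive_C (fun s => Cexp (RtoC s * z) - 1)%C x (z * Cexp (RtoC x * z))%C /\
  is_derive_C (fun s => Cexp (RtoC s * z) - 1 - RtoC s * z)%C x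
              (z * (Cexp (RtoC x * z) - 1))%C /\
  is_derive_C (fun s => Cexp (RtoC s * z) - 1 - RtoC s * z - RtoC (s ^ 2 / 2) * z ^ 2)%C x
              (z * (Cexp (RtoC x * z) - 1 - RtoC x * z))%C.
Proof.
  destruct z as [p q]; unfold is_derive_C, Cexp; simpl.
  split; [|split]; split; auto_derive; trivial; unfold Rminus; field.
Qed.

(* Each remainder of s |-> e^(s z) has derivative z times the previous one, so
   Cmod_le_of_derive_le bounds them in turn on [0, 1]. *)
Lemma Cexp_taylor_bounds (z : C) :
  Cmod (Cexp z - 1) <= 2 * Cmod z * exp (Cmod z) /\
  Cmod (Cexp z - 1 - z - RtoC (1 / 2) * z ^ 2) <= 8 * Cmod z ^ 3 * exp (Cmod z).
Proof.
  set (E := Cmod z * exp (Cmod z)).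
  assert (hD := is_derive_C_Cexp_remainders z).
  assert (hE0 : Cexp (RtoC 0 * z) = 1%C).
  { replace (RtoC 0 * z)%C with (RtoC 0) by ring; rewrite Cexp_RtoC, exp_0; reflexivity. }
  assert (hz := Cmod_ge_0 z).
  assert (hR0 : forall x, 0 <= x <= 1 -> Cmod (z * Cexp (RtoC x * z)) <= E * x ^ 0).
  { intros x hx; rewrite Cmod_mult, Cmod_Cexp, pow_O, Rmult_1_r.
    apply Rmult_le_compat_l; [exact hz | apply exp_le_compat].
    replace (Re (RtoC x * z)) with (x * Re z) by (destruct z; simpl; ring).
    assert (h := re_le_Cmod z); apply Rabs_le_between in h; nra. }
  assert (hR1 : forall x, 0 <= x <= 1 -> Cmod (Cexp (RtoC x * z) - 1) <= 2 * E * x ^ 1).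
  { apply (Cmod_le_of_derive_le _ (fun x => z * Cexp (RtoC x * z))%C);
      [rewrite hE0; ring | intros x _; apply hD | exact hR0]. }
  assert (hR2 : forall x, 0 <= x <= 1 ->
            Cmod (Cexp (RtoC x * z) - 1 - RtoC x * z) <= 2 * (Cmod z * (2 * E)) * x ^ 2).
  { apply (Cmod_le_of_derive_le _ (fun x => z * (Cexp (RtoC x * z) - 1))%C);
      [rewrite hE0; ring | intros x _; apply hD |].
    intros x hx; rewrite Cmod_mult, Rmult_assoc.
    apply Rmult_le_compat_l; [exact hz | apply hR1, hx]. }
  assert (hR3 : forall x, 0 <= x <= 1 ->
            Cmod (Cexp (RtoC x * z) - 1 - RtoC x * z - RtoC (x ^ 2 / 2) * z ^ 2)
              <= 2 * (Cmod z * (2 * (Cmod z * (2 * E)))) * x ^ 3).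
  { apply (Cmod_le_of_derive_le _ (fun x => z * (Cexp (RtoC x * z) - 1 - RtoC x * z))%C);
      [rewrite hE0, pow_i, Rdiv_0_l by lia; ring | intros x _; apply hD |].
    intros x hx; rewrite Cmod_mult, Rmult_assoc.
    apply Rmult_le_compat_l; [exact hz | apply hR2, hx]. }
  assert (h1 := hR1 1 ltac:(lra)); assert (h3 := hR3 1 ltac:(lra)).
  replace (RtoC 1 * z)%C with z in h1, h3 by ring.
  replace (1 ^ 2 / 2) with (1 / 2) in h3 by field.
  unfold E in h1, h3; split.
  - eapply Rle_trans; [exact h1 | right; ring].
  - eapply Rle_trans; [exact h3 | right; ring].
Qed.

(* The factor exp (x / sg) + exp (- x / sg) >= exp (|x| / sg) absorbs the growth in x, so that
   summing against the weights p_n costs only mgf (1 / sg) + mgf (- 1 / sg). *)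
Lemma Cexp_taylor2_scaled (x sg : R) (w : C) :
  0 < sg -> Cmod w * sg <= 1 / 2 ->
  Cmod (Cexp (RtoC x * w) - 1 - RtoC x * w - RtoC (1 / 2) * (RtoC x * w) ^ 2)
    <= 1728 * (Cmod w * sg) ^ 3 * (exp (x * / sg) + exp (x * - / sg)).
Proof.
  intros hsg hrho.
  set (rho := Cmod w * sg) in *; set (y := Rabs x / sg).
  assert (hrho0 : 0 <= rho) by (apply Rmult_le_pos; [apply Cmod_ge_0 | lra]).
  assert (hy : 0 <= y) by (apply Rdiv_le_0_compat; [apply Rabs_pos | exact hsg]).
  assert (hz : Cmod (RtoC x * w) = y * rho)
    by (rewrite Cmod_mult, Cmod_R; unfold y, rho; field; lra).
  eapply Rle_trans; [apply Cexp_taylor_bounds|]; rewrite hz.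
  assert (hexp : exp (y * rho) <= exp (y / 2)) by (apply exp_le_compat; nra).
  assert (hcube := cube_exp_half_le y hy).
  assert (hE := exp_Rabs_div_le x sg hsg); fold y in hE.
  assert (hy3 : 0 <= y ^ 3) by (apply pow_le, hy).
  assert (hr3 : 0 <= rho ^ 3) by (apply pow_le, hrho0).
  assert (y ^ 3 * exp (y * rho) <= 216 * exp y)
    by (eapply Rle_trans; [apply Rmult_le_compat_l; [exact hy3 | exact hexp] | exact hcube]).
  replace (8 * (y * rho) ^ 3 * exp (y * rho)) with (8 * rho ^ 3 * (y ^ 3 * exp (y * rho)))
    by ring.
  nra.
Qed.

Lemma Cexp_diff_scaled (x sg : R) (w w' : C) :
  0 < sg -> Cmod w * sg <= 1 / 6 -> Cmod w' * sg <= 1 / 6 ->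
  Cmod (Cexp (RtoC x * w') - Cexp (RtoC x * w))
    <= 4 * sg * Cmod (w' - w) * (exp (x * / sg) + exp (x * - / sg)).
Proof.
  intros hsg hw hw'.
  replace (Cexp (RtoC x * w') - Cexp (RtoC x * w))%C
    with (Cexp (RtoC x * w) * (Cexp (RtoC x * (w' - w)) - 1))%C
    by (replace (RtoC x * w')%C with (RtoC x * w + RtoC x * (w' - w))%C by ring;
        rewrite Cexp_add; ring).
  set (d := Cmod (w' - w)); set (y := Rabs x / sg).
  assert (hd : d <= Cmod w + Cmod w').
  { unfold d, Cminus; eapply Rle_trans; [apply Cmod_triangle | rewrite Cmod_opp; lra]. }
  assert (hd0 : 0 <= d) by apply Cmod_ge_0.
  assert (hy : 0 <= y) by (apply Rdiv_le_0_compat; [apply Rabs_pos | exact hsg]).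
  assert (hx : Rabs x = y * sg) by (unfold y; field; lra).
  rewrite Cmod_mult, Cmod_Cexp.
  eapply Rle_trans.
  { apply Rmult_le_compat_l; [apply Rlt_le, exp_pos | apply Cexp_taylor_bounds]. }
  rewrite Cmod_mult, Cmod_R; fold d; rewrite hx.
  assert (hre : Re (RtoC x * w) <= y * sg * Cmod w).
  { rewrite <- hx, <- Cmod_R, <- Cmod_mult.
    eapply Rle_trans; [apply Rle_abs | apply re_le_Cmod]. }
  assert (hexp : exp (Re (RtoC x * w)) * exp (y * sg * d) <= exp (y / 2)).
  { rewrite <- exp_plus; apply exp_le_compat.
    assert (hs : sg * Cmod w + sg * d <= 1 / 2) by nra; nra. }
  assert (hlin := lin_exp_half_le y hy).
  assert (hE := exp_Rabs_div_le x sg hsg); fold y in hE.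
  replace (exp (Re (RtoC x * w)) * (2 * (y * sg * d) * exp (y * sg * d)))
    with (2 * sg * d * y * (exp (Re (RtoC x * w)) * exp (y * sg * d))) by ring.
  assert (h2 : 0 <= 2 * sg * d) by nra.
  assert (0 <= 2 * sg * d * y) by nra.
  assert (2 * sg * d * y * (exp (Re (RtoC x * w)) * exp (y * sg * d))
            <= 2 * sg * d * (y * exp (y / 2))) by nra.
  assert (2 * sg * d * (y * exp (y / 2)) <= 2 * sg * d * (2 * exp y))
    by (apply Rmult_le_compat_l; lra).
  nra.
Qed.

(** * A logarithm on the right half-plane *)

(* The principal logarithm on the half-plane Re z > 0 only. *)
Definition Clog (z : C) : C := (ln (Cmod z), atan (Im z / Re z)).

Lemma ln_Cmod (z : C) : ln (Cmod z) = ln (Re z ^ 2 + Im z ^ 2) / 2.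
Proof.
  rewrite <- Cmod2_alt.
  destruct (Rle_lt_or_eq_dec _ _ (Cmod_ge_0 z)) as [hz|hz].
  - rewrite ln_pow by exact hz; simpl; field.
  - assert (ln0 : ln 0 = 0) by (unfold ln; destruct (Rlt_dec 0 0) as [h|h];
                                    [destruct (Rlt_irrefl 0 h) | reflexivity]).
    rewrite <- hz; replace (0 ^ 2) with 0 by ring; rewrite ln0; field.
Qed.

Lemma is_derive_C_Clog_line (z v : C) (s : R) :
  0 < Re (z + RtoC s * v) ->
  is_derive_C (fun x => Clog (z + RtoC x * v)) s (v / (z + RtoC s * v))%C.
Proof.
  intros hre; split.
  - apply (is_derive_ext (fun x => ln (Re (z + RtoC x * v) ^ 2 + Im (z + RtoC x * v) ^ 2) / 2)).
    { intros x; rewrite <- ln_Cmod; reflexivity. }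
    destruct z as [x0 y0], v as [vx vy]; simpl in hre |- *; unfold Rminus in *.
    auto_derive; set (a := x0 + (s * vx + - (0 * vy))) in *;
      set (b := y0 + (s * vy + 0 * vx)) in *; [nra | field; nra].
  - destruct z as [x0 y0], v as [vx vy]; unfold Clog; simpl in hre |- *; unfold Rminus in *.
    auto_derive; set (a := x0 + (s * vx + - (0 * vy))) in *;
      set (b := y0 + (s * vy + 0 * vx)) in *; [lra | field; nra].
Qed.

Lemma Cexp_Clog (z : C) : 0 < Re z -> Cexp (Clog z) = z.
Proof.
  destruct z as [x y]; simpl; intros hx; unfold Cexp, Clog; simpl.
  set (M := Cmod (x, y)).
  assert (hM : 0 < M).
  { unfold M; eapply Rlt_le_trans; [|apply re_le_Cmod]; simpl; rewrite Rabs_right; lra. }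
  assert (hM2 : M ^ 2 = x ^ 2 + y ^ 2) by (unfold M; apply Cmod2_alt).
  assert (hs : sqrt (1 + (y / x)²) = M / x).
  { replace (1 + (y / x)²) with (Rsqr (M / x)).
    - apply sqrt_Rsqr, Rlt_le, Rdiv_lt_0_compat; lra.
    - unfold Rsqr; replace (M / x * (M / x)) with (M ^ 2 / x ^ 2) by (field; lra).
      rewrite hM2; field; lra. }
  rewrite exp_ln, cos_atan, sin_atan, hs by lra; f_equal; field; lra.
Qed.

Lemma Clog_1 : Clog 1 = 0%C.
Proof.
  unfold Clog; simpl; rewrite Cmod_1, ln_1.
  replace (0 / 1) with 0 by field; rewrite atan_0; reflexivity.
Qed.

Lemma Re_ge_of_near_1 (z : C) : Cmod (z - 1) <= 1 / 4 -> 3 / 4 <= Re z.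
Proof.
  intros h; assert (hre := re_le_Cmod (z - 1)%C).
  replace (Re (z - 1)%C) with (Re z - 1) in hre by (destruct z; simpl; ring).
  apply Rabs_le_between in hre; lra.
Qed.

Lemma Cmod_ge_of_near_1 (z : C) : Cmod (z - 1) <= 1 / 4 -> 3 / 4 <= Cmod z.
Proof.
  intros h; assert (hre := Re_ge_of_near_1 z h); assert (hm := re_le_Cmod z).
  apply Rabs_le_between in hm; lra.
Qed.

Lemma Clog_lipschitz_near_1 (z1 z2 : C) :
  Cmod (z1 - 1) <= 1 / 4 -> Cmod (z2 - 1) <= 1 / 4 ->
  Cmod (Clog z2 - Clog z1) <= 8 / 3 * Cmod (z2 - z1).
Proof.
  intros h1 h2.
  set (zs := fun x => (z1 + RtoC x * (z2 - z1))%C).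
  assert (hzs : forall x, 0 <= x <= 1 -> Cmod (zs x - 1) <= 1 / 4).
  { intros x hx.
    replace (zs x - 1)%C with (RtoC (1 - x) * (z1 - 1) + RtoC x * (z2 - 1))%C
      by (unfold zs; rewrite RtoC_minus; ring).
    eapply Rle_trans; [apply Cmod_triangle|].
    rewrite !Cmod_mult, !Cmod_R, !Rabs_right by lra; nra. }
  assert (hbound := Cmod_le_of_derive_le (fun x => Clog (zs x) - Clog z1)%C
     (fun x => (z2 - z1) / zs x)%C (4 / 3 * Cmod (z2 - z1)) 0).
  replace (Clog z2) with (Clog (zs 1)) by (unfold zs; f_equal; ring).
  eapply Rle_trans; [apply hbound | right; field].
  - unfold zs; replace (z1 + RtoC 0 * (z2 - z1))%C with z1 by ring; ring.
  - intros x hx.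
    replace ((z2 - z1) / zs x)%C with ((z2 - z1) / zs x - 0)%C by ring.
    apply is_derive_C_minus; [|apply is_derive_C_const].
    apply is_derive_C_Clog_line; assert (h := Re_ge_of_near_1 _ (hzs x hx)); unfold zs in h; lra.
  - intros x hx; assert (h := Cmod_ge_of_near_1 _ (hzs x hx)).
    rewrite Cmod_div by (apply Cmod_gt_0; lra).
    assert (hd := Cmod_ge_0 (z2 - z1)); rewrite pow_O.
    apply Rle_div_l; [lra | nra].
  - lra.
Qed.

Lemma Clog_taylor_near_1 (u : C) :
  Cmod u <= 1 / 4 -> Cmod (Clog (1 + u) - u) <= 8 / 3 * Cmod u ^ 2.
Proof.
  intros hu.
  set (zs := fun x => (1 + RtoC x * u)%C).
  assert (hzs : forall x, 0 <= x <= 1 -> Cmod (zs x - 1) <= 1 / 4).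
  { intros x hx; replace (zs x - 1)%C with (RtoC x * u)%C by (unfold zs; ring).
    rewrite Cmod_mult, Cmod_R, Rabs_right by lra.
    assert (h := Cmod_ge_0 u); nra. }
  assert (hbound := Cmod_le_of_derive_le (fun x => Clog (zs x) - RtoC x * u)%C
     (fun x => u / zs x - u)%C (4 / 3 * Cmod u ^ 2) 1).
  replace (1 + u)%C with (zs 1) by (unfold zs; ring).
  replace u with (RtoC 1 * u)%C at 1 by ring.
  eapply Rle_trans; [apply hbound | right; field].
  - unfold zs; replace (1 + RtoC 0 * u)%C with (RtoC 1) by ring; rewrite Clog_1; ring.
  - intros x hx; apply is_derive_C_minus; [|apply is_derive_C_line].
    apply is_derive_C_Clog_line; assert (h := Re_ge_of_near_1 _ (hzs x hx)); unfold zs in h; lra.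
  - intros x hx; assert (h := Cmod_ge_of_near_1 _ (hzs x hx)).
    assert (hnz : zs x <> 0%C) by (apply Cmod_gt_0; lra).
    replace (u / zs x - u)%C with (- (RtoC x * u ^ 2) / zs x)%C
      by (unfold zs in *; field; exact hnz).
    rewrite Cmod_div, Cmod_opp, Cmod_mult, Cmod_R, Rabs_right, Cmod_pow by (auto; lra).
    assert (hu2 := pow2_ge_0 (Cmod u)).
    assert (hxu : 0 <= x * Cmod u ^ 2) by nra.
    rewrite pow_1; apply Rle_div_l; [lra | nra].
  - lra.
Qed.

Lemma Clog_one_add_approx (u q : C) (rho K eps : R) :
  0 <= rho -> rho ^ 2 <= 1 / 4 -> Cmod u <= rho ^ 2 -> Cmod (u - q) <= K * rho ^ 3 ->
  K * rho <= eps / 2 -> 16 / 3 * rho ^ 2 <= eps ->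
  Cmod (Clog (1 + u) - q) <= eps * rho ^ 2.
Proof.
  intros hrho hrho4 hu huq hK he.
  replace (Clog (1 + u) - q)%C with ((Clog (1 + u) - u) + (u - q))%C by ring.
  eapply Rle_trans; [apply Cmod_triangle|].
  assert (hlog := Clog_taylor_near_1 u ltac:(lra)).
  assert (hu0 := Cmod_ge_0 u).
  assert (hu2 : Cmod u ^ 2 <= rho ^ 2 * rho ^ 2) by (rewrite <- Rpow_mult_distr; simpl in *; nra).
  assert (hr2 := pow2_ge_0 rho).
  replace (K * rho ^ 3) with ((K * rho) * rho ^ 2) in huq by ring.
  assert ((K * rho) * rho ^ 2 <= eps / 2 * rho ^ 2) by (apply Rmult_le_compat_r; lra).
  nra.
Qed.

Definition PSexp (c : nat -> R) (s : R) : R := PSeries c (exp s).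

Definition PS_nmul (c : nat -> R) (n : nat) : R := INR n * c n.

Lemma CV_radius_nmul (c : nat -> R) :
  CV_radius c = p_infty -> CV_radius (PS_nmul c) = p_infty.
Proof.
  intros h; rewrite (CV_radius_ext (PS_nmul c) (PS_incr_1 (PS_derive c))).
  - rewrite CV_radius_incr_1, CV_radius_derive; exact h.
  - intros [|n]; unfold PS_nmul, PS_incr_1, PS_derive;
      [simpl; unfold zero; simpl; ring | reflexivity].
Qed.

Section EntireExpSeries.

Variable c : nat -> R.
Hypothesis hc : CV_radius c = p_infty.

Lemma is_series_PSexp (s : R) : is_series (fun n => c n * exp s ^ n) (PSexp c s).
Proof.
  apply is_pseries_R, PSeries_correct, CV_radius_inside; rewrite hc; exact I.
Qed.

Lemma is_derive_PSexp (s : R) : is_derive (PSexp c) s (PSexp (PS_nmul c) s).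
Proof.
  assert (hd := is_derive_PSeries c (exp s) ltac:(rewrite hc; exact I)).
  assert (hcomp := is_derive_comp (PSeries c) exp s _ _ hd (is_derive_exp s)).
  replace (PSexp (PS_nmul c) s) with (exp s * PSeries (PS_derive c) (exp s)); [exact hcomp|].
  symmetry; apply is_series_unique, is_series_decr_1.
  assert (hder := PSeries_correct (PS_derive c) (exp s)
                    ltac:(apply CV_radius_inside; rewrite CV_radius_derive, hc; exact I)).
  apply is_pseries_R, (is_series_scal_l (exp s)) in hder.
  eapply is_series_ext; [|replace (plus _ _) with (exp s * PSeries (PS_derive c) (exp s));
                           [exact hder | unfold PS_nmul, plus, opp; simpl; ring]].
  intros n; unfold PS_nmul, PS_derive, scal; simpl; unfold mult; simpl; ring.
Qed.

End EntireExpSeries.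

(** * The centred distribution of the weights *)

Section CentredMoments.

Variable a : nat -> R.
Hypothesis hc : CV_radius (coefG a) = p_infty.
Hypothesis hinf : forall N : nat, exists n, (N <= n)%nat /\ a n <> 0.

Let S1 := PSexp (PS_nmul (coefG a)).
Let S2 := PSexp (PS_nmul (PS_nmul (coefG a))).

Lemma coefG_nonneg (n : nat) : 0 <= coefG a n.
Proof. unfold coefG; apply pow2_ge_0. Qed.

Lemma coefG_pos (n : nat) : a n <> 0 -> 0 < coefG a n.
Proof. intros h; unfold coefG; apply pow2_gt_0, h. Qed.

Lemma Hf_pos (t : R) : 0 < Hf a t.
Proof.
  destruct (hinf 0%nat) as [n [_ hn]].
  assert (hterm : forall k, 0 <= coefG a k * exp t ^ k)
    by (intros k; apply Rmult_le_pos; [apply coefG_nonneg | apply pow_le, Rlt_le, exp_pos]).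
  eapply Rlt_le_trans; [|exact (is_series_term_le _ _ (is_series_PSexp _ hc t) hterm n)].
  apply Rmult_lt_0_compat; [apply coefG_pos, hn | apply pow_lt, exp_pos].
Qed.

Lemma is_derive_Hf (t : R) : is_derive (Hf a) t (S1 t).
Proof. exact (is_derive_PSexp _ hc t). Qed.

Lemma Af_eq (t : R) : Af a t = S1 t / Hf a t.
Proof. unfold Af; rewrite (is_derive_unique _ _ _ (is_derive_Hf t)); reflexivity. Qed.

Lemma is_derive_Af_explicit (t : R) :
  is_derive (Af a) t ((S2 t * Hf a t - S1 t * S1 t) / Hf a t ^ 2).
Proof.
  apply (is_derive_ext (fun s => S1 s / Hf a s)); [intros s; rewrite Af_eq; reflexivity|].
  apply is_derive_div;
    [apply is_derive_PSexp, CV_radius_nmul, hc | apply is_derive_Hf | apply Rgt_not_eq, Hf_pos].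
Qed.

Lemma Bf_eq (t : R) : Bf a t = (S2 t * Hf a t - S1 t * S1 t) / Hf a t ^ 2.
Proof. apply is_derive_unique, is_derive_Af_explicit. Qed.

Lemma is_derive_Af (t : R) : is_derive (Af a) t (Bf a t).
Proof. rewrite Bf_eq; apply is_derive_Af_explicit. Qed.

Lemma is_derive_ln_Hf (t : R) : is_derive (fun s => ln (Hf a s)) t (Af a t).
Proof.
  rewrite Af_eq.
  exact (is_derive_comp ln (Hf a) t _ _ (is_derive_ln _ (Hf_pos t)) (is_derive_Hf t)).
Qed.

Definition weight (t : R) (n : nat) : R := coefG a n * exp t ^ n / Hf a t.
Definition dev (t : R) (n : nat) : R := INR n - Af a t.
Definition mgf (t s : R) : R := exp (- Af a t * s) * Hf a (t + s) / Hf a t.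

Lemma weight_nonneg (t : R) (n : nat) : 0 <= weight t n.
Proof.
  unfold weight; apply Rmult_le_pos; [apply Rmult_le_pos|].
  - apply coefG_nonneg.
  - apply pow_le, Rlt_le, exp_pos.
  - apply Rlt_le, Rinv_0_lt_compat, Hf_pos.
Qed.

Lemma is_series_weight_moments (t : R) (k0 k1 k2 : R) :
  is_series (fun n => weight t n * (k0 + k1 * dev t n + k2 * dev t n ^ 2))
            (k0 + k2 * Bf a t).
Proof.
  assert (hH := Hf_pos t).
  assert (h0 := is_series_PSexp _ hc t).
  assert (h1 := is_series_PSexp _ (CV_radius_nmul _ hc) t).
  assert (h2 := is_series_PSexp _ (CV_radius_nmul _ (CV_radius_nmul _ hc)) t).
  refine (is_series_ext_eq _ _ _ _ _ _
           (is_series_lincomb3 _ _ _ _ _ _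
              ((k0 - k1 * Af a t + k2 * Af a t ^ 2) / Hf a t)
              ((k1 - 2 * k2 * Af a t) / Hf a t) (k2 / Hf a t) h0 h1 h2)).
  - intros n; unfold weight, dev, PS_nmul; field; lra.
  - change (PSexp (coefG a) t) with (Hf a t); rewrite Bf_eq, Af_eq; unfold S1, S2; field; lra.
Qed.

Lemma is_series_mgf (t s : R) :
  is_series (fun n => weight t n * exp (dev t n * s)) (mgf t s).
Proof.
  assert (hH := Hf_pos t).
  refine (is_series_ext_eq _ _ _ _ _ _
           (is_series_scal_l (exp (- Af a t * s) / Hf a t) _ _
              (is_series_PSexp _ hc (t + s)))).
  - intros n; unfold weight, dev, scal; simpl; unfold mult; simpl.
    replace ((INR n - Af a t) * s) with (INR n * s + - Af a t * s) by ring.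
    rewrite (exp_plus (INR n * s)), exp_mult_INR, (exp_plus t s), Rpow_mult_distr; field; lra.
  - unfold mgf, scal; simpl; unfold mult; simpl.
    change (PSexp (coefG a) (t + s)) with (Hf a (t + s)); field; lra.
Qed.

Lemma Bf_pos (t : R) : 0 < Bf a t.
Proof.
  destruct (hinf 0%nat) as [n1 [_ h1]]; destruct (hinf (S n1)) as [n2 [hn2 h2]].
  assert (hvar := is_series_weight_moments t 0 0 1).
  replace (0 + 1 * Bf a t) with (Bf a t) in hvar by ring.
  set (u := fun n => weight t n * (0 + 0 * dev t n + 1 * dev t n ^ 2)) in hvar.
  assert (hu : forall n, 0 <= u n)
    by (intros n; unfold u; apply Rmult_le_pos; [apply weight_nonneg | nra]).
  assert (hpos : forall n, a n <> 0 -> dev t n <> 0 -> 0 < u n).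
  { intros n hn hd; unfold u, weight; apply Rmult_lt_0_compat; [|nra].
    apply Rdiv_lt_0_compat; [|apply Hf_pos].
    apply Rmult_lt_0_compat; [apply coefG_pos, hn | apply pow_lt, exp_pos]. }
  assert (hne : INR n1 <> INR n2) by (apply not_INR; lia).
  destruct (Req_dec (dev t n1) 0) as [hd|hd].
  - assert (hd2 : dev t n2 <> 0) by (unfold dev in *; lra).
    exact (Rlt_le_trans _ _ _ (hpos n2 h2 hd2) (is_series_term_le _ _ hvar hu n2)).
  - exact (Rlt_le_trans _ _ _ (hpos n1 h1 hd) (is_series_term_le _ _ hvar hu n1)).
Qed.

Lemma mgf_le_exp_sq (t K d : R) :
  (forall x, Rabs x <= d -> Bf a (t + x) <= K) ->
  forall s, Rabs s <= d -> mgf t s <= exp (K * s ^ 2).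
Proof.
  intros hB s hs.
  (* ln (mgf t s) = psi (t + s) - psi t, where psi' = A - A t and A' = B. *)
  set (psi := fun y => ln (Hf a y) - y * Af a t).
  assert (hpsi : forall y, is_derive psi y (Af a y - Af a t)).
  { intros y.
    assert (hlin : is_derive (fun y => y * Af a t) y (Af a t)) by (auto_derive; [exact I | ring]).
    exact (is_derive_minus _ _ _ _ _ (is_derive_ln_Hf y) hlin). }
  assert (hts : Rabs (t + s - t) <= Rabs s) by (replace (t + s - t) with s by ring; lra).
  destruct (MVT_cor4 psi _ t (Rabs s) (fun y _ => hpsi y) (t + s) hts) as [xi [hpsi_eq hxi]].
  destruct (MVT_cor4 (Af a) (Bf a) t (Rabs s) (fun y _ => is_derive_Af y) xi
              ltac:(eapply Rle_trans; [exact hxi | exact hts])) as [xi2 [hA_eq hxi2]].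
  replace (t + s - t) with s in hpsi_eq, hxi by ring.
  assert (hBxi2 : Bf a xi2 <= K) by (replace xi2 with (t + (xi2 - t)) by ring; apply hB; lra).
  assert (hBpos := Bf_pos xi2).
  assert (hlog : psi (t + s) - psi t <= K * s ^ 2).
  { rewrite hpsi_eq, hA_eq.
    assert (hp : (xi - t) * s <= s ^ 2).
    { eapply Rle_trans; [apply Rle_abs|]; rewrite Rabs_mult, <- pow2_abs.
      simpl; rewrite Rmult_1_r; apply Rmult_le_compat_r; [apply Rabs_pos | exact hxi]. }
    destruct (Rle_lt_dec 0 ((xi - t) * s)); nra. }
  replace (mgf t s) with (exp (psi (t + s) - psi t)); [apply exp_le_compat, hlog|].
  assert (h0 := Hf_pos t); assert (h1 := Hf_pos (t + s)).
  unfold psi, mgf.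
  replace (ln (Hf a (t + s)) - (t + s) * Af a t - (ln (Hf a t) - t * Af a t))
    with (- Af a t * s + (ln (Hf a (t + s)) + - ln (Hf a t))) by ring.
  rewrite !exp_plus, exp_Ropp, !exp_ln by assumption; field; lra.
Qed.

Lemma mgf_le_exp_of_window (t K : R) :
  (forall x, Rabs x <= / sqrt (Bf a t) -> Bf a (t + x) <= K * Bf a t) ->
  forall s, Rabs s <= / sqrt (Bf a t) -> mgf t s <= exp K.
Proof.
  intros hwin s hs.
  eapply Rle_trans; [apply (mgf_le_exp_sq t _ _ hwin s hs)|]; apply exp_le_compat.
  assert (hb := Bf_pos t); assert (hsg : 0 < sqrt (Bf a t)) by apply sqrt_lt_R0, hb.
  assert (hK : 0 <= K).
  { assert (h := hwin 0 ltac:(rewrite Rabs_R0; apply Rlt_le, Rinv_0_lt_compat, hsg)).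
    rewrite Rplus_0_r in h; assert (h' := Bf_pos (t + 0)); rewrite Rplus_0_r in h'; nra. }
  assert (hs1 : Rabs s * sqrt (Bf a t) <= 1).
  { apply (Rmult_le_compat_r (sqrt (Bf a t))) in hs; [|lra].
    rewrite Rinv_l in hs by lra; exact hs. }
  assert (hs2 : (Rabs s * sqrt (Bf a t)) ^ 2 <= 1)
    by (rewrite <- (pow1 2); apply pow_incr;
        split; [apply Rmult_le_pos; [apply Rabs_pos | lra] | exact hs1]).
  rewrite Rpow_mult_distr, pow2_abs, pow2_sqrt in hs2 by lra; nra.
Qed.

(* Defined componentwise because Coquelicot's Series is real-valued. *)
Definition mgfC (t : R) (w : C) : C :=
  (Series (fun n => weight t n * Re (Cexp (RtoC (dev t n) * w))),
   Series (fun n => weight t n * Im (Cexp (RtoC (dev t n) * w)))).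

Lemma is_series_mgfC (t : R) (w : C) :
  is_series (V := C_NormedModule)
    (fun n => RtoC (weight t n) * Cexp (RtoC (dev t n) * w))%C (mgfC t w).
Proof.
  assert (hdom := is_series_plus _ _ _ _ (is_series_mgf t (Cmod w)) (is_series_mgf t (- Cmod w))).
  assert (hbound : forall (f : C -> R), (forall z, Rabs (f z) <= Cmod z) ->
            ex_series (fun n => weight t n * f (Cexp (RtoC (dev t n) * w)))).
  { intros f hf; eapply (ex_series_le (V := R_CompleteNormedModule)); [|eexists; exact hdom].
    intros n; change (norm ?u) with (Rabs u).
    rewrite Rabs_mult, (Rabs_pos_eq _ (weight_nonneg t n)); unfold plus; simpl.
    rewrite <- Rmult_plus_distr_l; apply Rmult_le_compat_l; [apply weight_nonneg|].
    eapply Rle_trans; [apply hf | apply Cexp_RtoC_mult_le]. }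
  apply is_series_C.
  - eapply is_series_ext; [|apply Series_correct, hbound, re_le_Cmod].
    intros n; simpl; ring.
  - eapply is_series_ext; [|apply Series_correct, hbound, im_le_Cmod].
    intros n; simpl; ring.
Qed.

Lemma is_series_weight_quadratic (t : R) (w : C) :
  is_series (V := C_NormedModule)
    (fun n => RtoC (weight t n) *
              (1 + RtoC (dev t n) * w + RtoC (1 / 2) * (RtoC (dev t n) * w) ^ 2))%C
    (1 + RtoC (1 / 2) * w ^ 2 * RtoC (Bf a t))%C.
Proof.
  destruct w as [p q].
  replace (1 + RtoC (1 / 2) * (p, q) ^ 2 * RtoC (Bf a t))%C
    with (1 + (p ^ 2 - q ^ 2) / 2 * Bf a t, p * q * Bf a t)
    by (apply injective_projections; simpl; field).
  apply is_series_C.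
  - refine (is_series_ext_eq _ _ _ _ _ _ (is_series_weight_moments t 1 p ((p ^ 2 - q ^ 2) / 2)));
      [intros n; simpl; field | reflexivity].
  - refine (is_series_ext_eq _ _ _ _ _ _ (is_series_weight_moments t 0 q (p * q)));
      [intros n; simpl; field | ring].
Qed.

Lemma mgfC_0 (t : R) : mgfC t 0 = 1%C.
Proof.
  assert (hC0 : forall n, Cexp (RtoC (dev t n) * 0) = 1%C)
    by (intros n; rewrite Cmult_0_r, Cexp_RtoC, exp_0; reflexivity).
  unfold mgfC; apply injective_projections; cbn [fst snd]; apply is_series_unique.
  - refine (is_series_ext_eq _ _ _ _ _ _ (is_series_weight_moments t 1 0 0));
      [intros n; rewrite hC0, re_RtoC; ring | rewrite re_RtoC; ring].
  - refine (is_series_ext_eq _ _ _ _ _ _ (is_series_weight_moments t 0 0 0));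
      [intros n; rewrite hC0, im_RtoC; ring | rewrite im_RtoC; ring].
Qed.

Lemma is_pseries_Hf_mgfC (t : R) (w : C) :
  is_pseries (fun n => RtoC (coefG a n)) (Cexp (RtoC t + w))
             (RtoC (Hf a t) * Cexp (w * RtoC (Af a t)) * mgfC t w)%C.
Proof.
  assert (hH : RtoC (Hf a t) <> 0%C)
    by (intros h; apply RtoC_inj in h; assert (hp := Hf_pos t); lra).
  refine (is_series_ext _ _ _ _ (is_series_scal (K := C_AbsRing) _ _ _ (is_series_mgfC t w))).
  intros n; change (scal ?x ?y) with (Cmult x y); rewrite pow_n_Cexp.
  match goal with |- ?x = ?y => change (@eq C x y) end.
  replace (Cexp (RtoC (INR n) * (RtoC t + w)))
    with (Cexp (RtoC (INR n * t)) * Cexp (w * RtoC (Af a t)) * Cexp (RtoC (dev t n) * w))%C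
    by (rewrite <- !Cexp_add; f_equal; unfold dev; rewrite RtoC_mult, RtoC_minus; ring).
  unfold weight; rewrite <- exp_mult_INR, Cexp_RtoC, RtoC_div, !RtoC_mult
    by (apply Rgt_not_eq, Hf_pos).
  field; exact hH.
Qed.

Definition log_mgfC (t : R) (w : C) : C := w * RtoC (Af a t) + Clog (mgfC t w).

Lemma log_mgfC_0 (t : R) : log_mgfC t 0 = 0%C.
Proof. unfold log_mgfC; rewrite mgfC_0, Clog_1; ring. Qed.

Lemma is_pseries_log_mgfC (t : R) (w : C) :
  0 < Re (mgfC t w) ->
  is_pseries (fun n => RtoC (coefG a n)) (Cexp (RtoC t + w))
             (RtoC (Hf a t) * Cexp (log_mgfC t w))%C.
Proof.
  intros hre; unfold log_mgfC; rewrite (Cexp_add (w * _)), Cexp_Clog, Cmult_assoc by exact hre.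
  apply is_pseries_Hf_mgfC.
Qed.

Section LocalEstimates.

Variables (t sg Q : R).
Hypothesis hsg : 0 < sg.
Hypothesis hsgB : Bf a t = sg ^ 2.
Hypothesis hQ1 : mgf t (/ sg) <= Q.
Hypothesis hQ2 : mgf t (- / sg) <= Q.

Lemma Cmod_weighted_series_le (k : R) (f : nat -> C) (l : C) :
  0 <= k ->
  is_series (V := C_NormedModule) (fun n => RtoC (weight t n) * f n)%C l ->
  (forall n, Cmod (f n) <= k * (exp (dev t n * / sg) + exp (dev t n * - / sg))) ->
  Cmod l <= 2 * k * Q.
Proof.
  intros hk hl hf.
  assert (hsum := is_series_scal_l k _ _
                    (is_series_plus _ _ _ _ (is_series_mgf t (/ sg)) (is_series_mgf t (- / sg)))).
  eapply Rle_trans; [apply (is_series_norm_le _ _ _ _ hl hsum)|].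
  2: unfold plus, scal; simpl; unfold mult; simpl; nra.
  intros n; change (norm ?u) with (Cmod u).
  rewrite Cmod_mult, Cmod_R, Rabs_pos_eq by apply weight_nonneg.
  unfold plus, scal; simpl; unfold mult; simpl.
  replace (k * (weight t n * exp (dev t n * / sg) + weight t n * exp (dev t n * - / sg)))
    with (weight t n * (k * (exp (dev t n * / sg) + exp (dev t n * - / sg)))) by ring.
  apply Rmult_le_compat_l; [apply weight_nonneg | apply hf].
Qed.

Lemma mgfC_taylor2 (w : C) :
  Cmod w * sg <= 1 / 2 ->
  Cmod (mgfC t w - 1 - RtoC (1 / 2) * w ^ 2 * RtoC (Bf a t))
    <= 3456 * Q * (Cmod w * sg) ^ 3.
Proof.
  intros hw.
  replace (3456 * Q * (Cmod w * sg) ^ 3) with (2 * (1728 * (Cmod w * sg) ^ 3) * Q) by ring.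
  apply (Cmod_weighted_series_le _
           (fun n => Cexp (RtoC (dev t n) * w) - 1 - RtoC (dev t n) * w
                     - RtoC (1 / 2) * (RtoC (dev t n) * w) ^ 2)%C); auto.
  - assert (h := Cmod_ge_0 w); apply Rmult_le_pos; [lra | apply pow_le; nra].
  - replace (mgfC t w - 1 - RtoC (1 / 2) * w ^ 2 * RtoC (Bf a t))%C
      with (minus (mgfC t w) (1 + RtoC (1 / 2) * w ^ 2 * RtoC (Bf a t))%C)
      by (unfold minus, plus, opp; simpl; ring).
    eapply is_series_ext; [|exact (is_series_minus _ _ _ _ (is_series_mgfC t w)
                                     (is_series_weight_quadratic t w))].
    intros n; unfold plus, opp; simpl; ring.
  - intros n; apply Cexp_taylor2_scaled; assumption.
Qed.

Lemma mgfC_lipschitz (w w' : C) :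
  Cmod w * sg <= 1 / 6 -> Cmod w' * sg <= 1 / 6 ->
  Cmod (mgfC t w' - mgfC t w) <= 8 * sg * Q * Cmod (w' - w).
Proof.
  intros hw hw'.
  replace (8 * sg * Q * Cmod (w' - w)) with (2 * (4 * sg * Cmod (w' - w)) * Q) by ring.
  apply (Cmod_weighted_series_le _
           (fun n => Cexp (RtoC (dev t n) * w') - Cexp (RtoC (dev t n) * w))%C); auto.
  - assert (h := Cmod_ge_0 (w' - w)); nra.
  - eapply is_series_ext; [|exact (is_series_minus _ _ _ _ (is_series_mgfC t w')
                                     (is_series_mgfC t w))].
    intros n; unfold plus, opp; simpl; ring.
  - intros n; apply Cexp_diff_scaled; assumption.
Qed.

Lemma mgfC_near_1 (w : C) :
  Cmod w * sg <= 1 / 2 -> 3456 * Q * (Cmod w * sg) <= 1 / 2 ->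
  Cmod (mgfC t w - 1) <= (Cmod w * sg) ^ 2.
Proof.
  intros hrho hK.
  assert (hT := mgfC_taylor2 w hrho).
  assert (hrho0 : 0 <= Cmod w * sg) by (apply Rmult_le_pos; [apply Cmod_ge_0 | lra]).
  replace (mgfC t w - 1)%C
    with ((mgfC t w - 1 - RtoC (1 / 2) * w ^ 2 * RtoC (Bf a t))
          + RtoC (1 / 2) * w ^ 2 * RtoC (Bf a t))%C by ring.
  eapply Rle_trans; [apply Cmod_triangle|].
  rewrite !Cmod_mult, Cmod_pow, !Cmod_R, !Rabs_pos_eq by (try rewrite hsgB; nra).
  replace (1 / 2 * Cmod w ^ 2 * Bf a t) with (1 / 2 * (Cmod w * sg) ^ 2) by (rewrite hsgB; ring).
  nra.
Qed.

Lemma log_mgfC_lipschitz (w w' : C) :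
  Cmod w * sg <= 1 / 6 -> Cmod w' * sg <= 1 / 6 ->
  Cmod (mgfC t w - 1) <= 1 / 4 -> Cmod (mgfC t w' - 1) <= 1 / 4 ->
  Cmod (log_mgfC t w' - log_mgfC t w) <= (Rabs (Af a t) + 64 / 3 * sg * Q) * Cmod (w' - w).
Proof.
  intros hw hw' hG hG'; unfold log_mgfC.
  replace ((w' * RtoC (Af a t) + Clog (mgfC t w')) - (w * RtoC (Af a t) + Clog (mgfC t w)))%C
    with ((w' - w) * RtoC (Af a t) + (Clog (mgfC t w') - Clog (mgfC t w)))%C by ring.
  eapply Rle_trans; [apply Cmod_triangle|]; rewrite Cmod_mult, Cmod_R.
  assert (hlip := mgfC_lipschitz w w' hw hw').
  assert (hlog := Clog_lipschitz_near_1 _ _ hG hG').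
  assert (hd := Cmod_ge_0 (w' - w)); nra.
Qed.

Lemma log_mgfC_approx (eps : R) (w : C) :
  Cmod w * sg <= 1 / 2 -> 3456 * Q * (Cmod w * sg) <= eps / 2 ->
  3456 * Q * (Cmod w * sg) <= 1 / 2 -> 16 / 3 * (Cmod w * sg) ^ 2 <= eps ->
  Cmod (log_mgfC t w - (w * RtoC (Af a t) + RtoC (1 / 2) * w ^ 2 * RtoC (Bf a t)))
    <= eps * Cmod w ^ 2 * Bf a t.
Proof.
  intros hrho hKe hK1 heps; unfold log_mgfC.
  replace (w * RtoC (Af a t) + Clog (mgfC t w)
           - (w * RtoC (Af a t) + RtoC (1 / 2) * w ^ 2 * RtoC (Bf a t)))%C
    with (Clog (1 + (mgfC t w - 1)) - RtoC (1 / 2) * w ^ 2 * RtoC (Bf a t))%C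
    by (replace (1 + (mgfC t w - 1))%C with (mgfC t w) by ring; ring).
  replace (eps * Cmod w ^ 2 * Bf a t) with (eps * (Cmod w * sg) ^ 2) by (rewrite hsgB; ring).
  assert (hrho0 : 0 <= Cmod w * sg) by (apply Rmult_le_pos; [apply Cmod_ge_0 | lra]).
  apply (Clog_one_add_approx _ _ _ (3456 * Q)); try assumption; [nra | | ].
  - apply mgfC_near_1; assumption.
  - apply mgfC_taylor2; assumption.
Qed.

End LocalEstimates.

(* 3456 Q is the constant of mgfC_taylor2. *)
Definition admissible_radius (eps Q : R) : R := Rmin (1 / 6) (Rmin eps 1 / (2 * (3456 * Q))).

Lemma admissible_radius_spec (eps Q : R) : 0 < eps -> 1 <= Q ->
  let eta := admissible_radius eps Q in
  0 < eta /\ eta <= 1 / 6 /\ 3456 * Q * eta <= eps / 2 /\ 3456 * Q * eta <= 1 / 2 /\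
  16 / 3 * eta ^ 2 <= eps.
Proof.
  intros heps hQ eta.
  assert (hm : 0 < Rmin eps 1) by (apply Rmin_pos; lra).
  assert (hm1 := Rmin_l eps 1); assert (hm2 := Rmin_r eps 1).
  assert (h6 : eta <= 1 / 6) by apply Rmin_l.
  assert (hK : 3456 * Q * eta <= Rmin eps 1 / 2).
  { replace (Rmin eps 1 / 2) with (3456 * Q * (Rmin eps 1 / (2 * (3456 * Q)))) by (field; lra).
    apply Rmult_le_compat_l; [lra | apply Rmin_r]. }
  assert (hpos : 0 < eta)
    by (apply Rmin_pos; [lra | apply Rdiv_lt_0_compat; lra]).
  repeat split; try lra; nra.
Qed.

Lemma log_mgfC_expansion (t Q eps : R) :
  0 < eps -> 1 <= Q ->
  mgf t (/ sqrt (Bf a t)) <= Q -> mgf t (- / sqrt (Bf a t)) <= Q ->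
  let disk := fun w : C => Cmod w <= admissible_radius eps Q / sqrt (Bf a t) in
  forall w : C, disk w ->
    filterlim (log_mgfC t) (within disk (locally w)) (locally (log_mgfC t w)) /\
    is_pseries (fun n => RtoC (coefG a n)) (Cexp (RtoC t + w))
               (Cmult (RtoC (Hf a t)) (Cexp (log_mgfC t w))) /\
    Cmod (log_mgfC t w - (w * RtoC (Af a t) + RtoC (1/2) * w ^ 2 * RtoC (Bf a t)))
      <= eps * (Cmod w) ^ 2 * Bf a t.
Proof.
  intros heps hQ hQ1 hQ2 disk.
  destruct (admissible_radius_spec eps Q heps hQ) as [heta [heta6 [hKe [hK1 heta2]]]].
  set (eta := admissible_radius eps Q) in *; set (sg := sqrt (Bf a t)) in *.
  assert (hsg : 0 < sg) by apply sqrt_lt_R0, Bf_pos.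
  assert (hsgB : Bf a t = sg ^ 2) by (unfold sg; rewrite pow2_sqrt; [lra | apply Rlt_le, Bf_pos]).
  assert (hrho : forall w, disk w -> 0 <= Cmod w * sg <= eta).
  { intros w hw; split; [apply Rmult_le_pos; [apply Cmod_ge_0 | lra]|].
    apply (Rmult_le_compat_r sg) in hw; [|lra]; unfold Rdiv in hw.
    rewrite Rmult_assoc, Rinv_l, Rmult_1_r in hw; lra. }
  assert (hnear : forall w, disk w -> Cmod (mgfC t w - 1) <= 1 / 4).
  { intros w hw; specialize (hrho w hw).
    eapply Rle_trans; [apply (mgfC_near_1 t sg Q); auto; nra | nra]. }
  intros w hw; split; [|split].
  - refine (filterlim_within_lipschitz (U := C_NormedModule) (V := C_NormedModule)
              (log_mgfC t) disk w (Rabs (Af a t) + 64 / 3 * sg * Q) _ _);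
      [assert (h := Rabs_pos (Af a t)); nra|].
    intros w' hw'; apply (log_mgfC_lipschitz t sg Q); auto;
      [specialize (hrho w hw) | specialize (hrho w' hw')]; lra.
  - apply is_pseries_log_mgfC, (Rlt_le_trans _ (3 / 4)); [lra | apply Re_ge_of_near_1, hnear, hw].
  - specialize (hrho w hw); apply (log_mgfC_approx t sg Q); auto; nra.
Qed.

End CentredMoments.

Lemma normal_value_local_bound (B : R -> R) (tl : nat -> R) (l0 : nat) :
  (forall s t, s <= t -> B s <= B t) -> (forall t, 0 < B t) ->
  (forall l, (l0 <= l)%nat -> B (tl l) = INR l ^ 6) ->
  forall t, normal_values tl l0 t ->
  forall x, Rabs x <= / sqrt (B t) -> B (t + x) <= 64 * B t.
Proof.
  intros hmono hpos hval t [l [hl0 [_ [hlo hhi]]]] x hx.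
  assert (hl1 : (1 <= l)%nat).
  { destruct l as [|l]; [|lia].
    specialize (hval 0%nat hl0); specialize (hpos (tl 0%nat)); simpl in hval; lra. }
  assert (hL : 1 <= INR l) by (apply (le_INR 1), hl1).
  assert (hgap : 0 < 2 / INR l ^ 2) by (apply Rdiv_lt_0_compat; [lra | apply pow_lt; lra]).
  assert (hBt : INR l ^ 6 <= B t) by (rewrite <- hval by exact hl0; apply hmono; lra).
  set (L := INR l) in *.
  assert (hsqrt : L ^ 3 <= sqrt (B t)).
  { rewrite <- (sqrt_pow2 (L ^ 3)) by (apply pow_le; lra).
    apply sqrt_le_1_alt; replace ((L ^ 3) ^ 2) with (L ^ 6) by ring; exact hBt. }
  assert (hL3 : 1 <= L ^ 3) by (apply pow_R1_Rle; lra).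
  assert (hx2 : Rabs x <= 2 / L ^ 2).
  { eapply Rle_trans; [exact hx|].
    apply (Rle_trans _ (/ L ^ 3)); [apply Rinv_le_contravar; lra|].
    unfold Rdiv; apply (Rmult_le_reg_l (L ^ 3)); [lra|].
    rewrite Rinv_r by lra; replace (L ^ 3 * (2 * / L ^ 2)) with (2 * L) by (field; lra); lra. }
  apply Rabs_le_between in hx2.
  eapply Rle_trans; [apply (hmono _ (tl (S l))); lra|].
  rewrite hval, S_INR by lia; fold L.
  assert ((L + 1) ^ 6 <= (2 * L) ^ 6) by (apply pow_incr; lra).
  replace ((2 * L) ^ 6) with (64 * L ^ 6) in * by ring; lra.
Qed.

Theorem proposition3p9
  (a : nat -> R)
  (ha_nonneg : forall n, 0 <= a n)
  (ha_inf : forall N : nat, exists n, (N <= n)%nat /\ a n <> 0)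
  (hG_entire : CV_radius (coefG a) = p_infty)
  (hB_mono : forall s t, s <= t -> Bf a s <= Bf a t)
  (hB_unbdd : forall M, exists t, M < Bf a t)
  (tl : nat -> R) (l0 : nat)
  (htl_val : forall l, (l0 <= l)%nat -> Bf a (tl l) = (INR l) ^ 6)
  (htl_incr : forall l, (l0 <= l)%nat -> tl l < tl (S l))
  (htl_first : forall l, (l < l0)%nat -> forall t, Bf a t <> (INR l) ^ 6) :
  forall eps : R, 0 < eps ->
  exists eta : R, 0 < eta /\
  exists t0 : R,
  forall t : R, normal_values tl l0 t -> t0 < t ->
  let disk := fun w : C => Cmod w <= eta / sqrt (Bf a t) in
  exists L : C -> C,
    L 0%C = 0%C /\
    forall w : C, disk w ->
      filterlim L (within disk (locally w)) (locally (L w)) /\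
      is_pseries (fun n => RtoC (coefG a n)) (Cexp (RtoC t + w))
                 (Cmult (RtoC (Hf a t)) (Cexp (L w))) /\
      Cmod (L w - (w * RtoC (Af a t) + RtoC (1/2) * w ^ 2 * RtoC (Bf a t)))
        <= eps * (Cmod w) ^ 2 * Bf a t.
Proof.
  intros eps heps.
  assert (hQ : 1 <= exp 64) by (assert (h := exp_ineq1_le 64); lra).
  exists (admissible_radius eps (exp 64)).
  split; [apply (admissible_radius_spec eps _ heps hQ)|].
  exists 0; intros t hnv _ disk.
  assert (hBpos := Bf_pos a hG_entire ha_inf).
  assert (hmgf := mgf_le_exp_of_window a hG_entire ha_inf t 64
                    (normal_value_local_bound _ _ _ hB_mono hBpos htl_val t hnv)).
  assert (hsg : 0 < / sqrt (Bf a t)) by apply Rinv_0_lt_compat, sqrt_lt_R0, hBpos.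
  exists (log_mgfC a t); split; [apply log_mgfC_0; assumption|].
  apply log_mgfC_expansion; auto; apply hmgf;
    [rewrite Rabs_pos_eq | rewrite Rabs_Ropp, Rabs_pos_eq]; lra.
Qed.
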